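(* Let $F$ be a field and $L_1,\dots,L_m$ finite separable field extensions of $F$ with $[L_i:F]=n_i$. Let $n=\mathrm{lcm}(n_1,\dots,n_m)$ and $L=\prod_{i=1}^m L_i$. Let $\alpha_1,\dots,\alpha_{m-1}\in F^\times$. Then $$\Big(\alpha_1^{n/n_1},\alpha_2^{n/n_2},\dots,\alpha_{m-1}^{n/n_{m-1}},\prod_{i=1}^{m-1}\alpha_i^{-n/n_m}\Big)\in RT_{L/F}(F).$$
   Context: The multinorm torus $T_{L/F}$ is the kernel of $\prod_{i} R_{L_i/F}\mathbb{G}_m\to\mathbb{G}_m$, $(x_i)\mapsto\prod_i N_{L_i/F}(x_i)$. $RT_{L/F}(F)$ denotes the subgroup of $T_{L/F}(F)$ of elements $R$-equivalent to the identity, where $R$-equivalence is the equivalence relation generated by: $x_0\sim x_1$ if there is an $F$-rational map $f:\mathbb{P}^1\dashrightarrow T_{L/F}$ with $f(0)=x_0$ and $f(1)=x_1$. *)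

From HB Require Import structures.
From mathcomp Require Import all_boot all_order all_algebra all_field.
From Stdlib Require Import Relations.
Set Implicit Arguments. Unset Strict Implicit. Unset Printing Implicit Defensive.
Import GRing.Theory.
Local Open Scope ring_scope.

Definition mul_mx (F : fieldType) (L : fieldExtType F) (c : L)
  : 'M[F]_(\dim {:L}) :=
  \matrix_(a < \dim {:L}, b < \dim {:L})
     coord (vbasis {:L}) b (c * tnth (vbasis {:L}) a).

Definition normLF (F : fieldType) (L : fieldExtType F) (c : L) : F :=
  \det (mul_mx c).

(* Norm N_{L[t]/F[t]}(p) of a polynomial p in L[t] = L (x)_F F[t]:
   determinant of the F[t]-matrix of multiplication by p. *)
Definition normpoly (F : fieldType) (L : fieldExtType F) (p : {poly L})
  : {poly F} :=
  \det (\matrix_(a < \dim {:L}, b < \dim {:L})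
          \poly_(k < size p) (mul_mx p`_k a b)).

Definition in_multinorm_torus (F : fieldType) (m : nat)
  (L : 'I_m -> fieldExtType F) (x : forall i, L i) : Prop :=
  (forall i, x i != 0) /\ \prod_(i < m) normLF (x i) = 1.

(* An F-rational map f : P^1 --> T_{L/F} defined at 0 and 1, i.e. a point of
   T_{L/F}(F(t)) regular at t = 0 and t = 1.  Each component lies in
   L_i (x)_F F(t) = L_i(t) and is written p_i(t)/q_i(t) with p_i in L_i[t]
   nonzero and q_i in F[t] with q_i(0) q_i(1) <> 0 (every element of L_i(t)
   regular at 0 and 1 has such a form).  The torus equation
   prod_i N(p_i/q_i) = 1 in F(t) reads prod_i N(p_i) = prod_i q_i^[L_i:F]. *)
Record ratmap_P1_torus (F : fieldType) (m : nat)
  (L : 'I_m -> fieldExtType F) := RatMap {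
  rm_num : forall i, {poly L i};
  rm_den : forall i, {poly F};
  rm_num_nz : forall i, rm_num i != 0;
  rm_den0 : forall i, (rm_den i).[0] != 0;
  rm_den1 : forall i, (rm_den i).[1] != 0;
  rm_eq : \prod_(i < m) normpoly (rm_num i)
          = \prod_(i < m) (rm_den i) ^+ (\dim {: L i})
}.

Definition rm_eval (F : fieldType) (m : nat) (L : 'I_m -> fieldExtType F)
  (f : ratmap_P1_torus L) (a : F) : forall i, L i :=
  fun i => (rm_num f i).[a%:A] / ((rm_den f i).[a])%:A.

Definition R_link (F : fieldType) (m : nat) (L : 'I_m -> fieldExtType F)
  (x0 x1 : forall i, L i) : Prop :=
  exists f : ratmap_P1_torus L, rm_eval f 0 = x0 /\ rm_eval f 1 = x1.

Definition R_equiv (F : fieldType) (m : nat) (L : 'I_m -> fieldExtType F) :=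
  clos_refl_sym_trans _ (@R_link F m L).

Definition in_RT (F : fieldType) (m : nat) (L : 'I_m -> fieldExtType F)
  (x : forall i, L i) : Prop :=
  in_multinorm_torus x /\ R_equiv (fun i => 1) x.

(* Put l_j(t) = 1 + t (alpha_j - 1), a path in F from 1 (at t = 0) to alpha_j
   (at t = 1), and e_i = n / n_i.  The tuple
     (l_1^e_1, ..., l_(m-1)^e_(m-1), (prod_j l_j)^(-e_m))
   of constants of F(t) embedded in the L_i(t) has norm product
   prod_j l_j^n * (prod_j l_j)^(-n) = 1, so it is a rational map from P^1 to
   the multinorm torus; it takes the value 1 at t = 0 and the given point at
   t = 1. *)

From mathcomp Require Import all_boot all_order all_algebra all_field.
From Stdlib Require Import FunctionalExtensionality Relations.
Set Implicit Arguments. Unset Strict Implicit.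
Import GRing.Theory.
Local Open Scope ring_scope.

Section LiftMaxRatio.

Variables (R : comPzRingType) (m : nat) (e : 'I_m.+1 -> nat).

Definition liftmax_num (beta : 'I_m -> R) (i : 'I_m.+1) : R :=
  if unlift ord_max i is Some j then beta j ^+ e i else 1.

Definition liftmax_den (beta : 'I_m -> R) (i : 'I_m.+1) : R :=
  if unlift ord_max i is Some _ then 1 else \prod_(j < m) beta j ^+ e ord_max.

Lemma prod_liftmax_num_den (d : 'I_m.+1 -> nat) (n : nat) (beta : 'I_m -> R) :
  (forall i, e i * d i = n)%N ->
  \prod_(i < m.+1) liftmax_num beta i ^+ d i
  = \prod_(i < m.+1) liftmax_den beta i ^+ d i.
Proof.
move=> edn; rewrite !(bigD1_ord ord_max) //= /liftmax_num /liftmax_den unlift_none.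
under eq_bigr => j _ do rewrite liftK -exprM edn.
under [in RHS]eq_bigr => j _ do rewrite liftK expr1n.
rewrite expr1n big1_eq mul1r mulr1 -prodrXl.
by apply: eq_bigr => j _; rewrite -exprM edn.
Qed.

Lemma liftmax_num1 i : liftmax_num (fun=> 1) i = 1.
Proof. by rewrite /liftmax_num; case: unlift => [j|]; rewrite ?expr1n. Qed.

Lemma liftmax_den1 i : liftmax_den (fun=> 1) i = 1.
Proof.
rewrite /liftmax_den; case: unlift => // .
by apply: big1 => j _; rewrite expr1n.
Qed.

End LiftMaxRatio.

Lemma rmorph_liftmax_num (R S : comPzRingType) (f : {rmorphism R -> S}) m e
    (beta : 'I_m -> R) (i : 'I_m.+1) :
  f (liftmax_num e beta i) = liftmax_num e (f \o beta) i.
Proof. by rewrite /liftmax_num; case: unlift => [j|]; rewrite ?rmorphXn ?rmorph1. Qed.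

Lemma rmorph_liftmax_den (R S : comPzRingType) (f : {rmorphism R -> S}) m e
    (beta : 'I_m -> R) (i : 'I_m.+1) :
  f (liftmax_den e beta i) = liftmax_den e (f \o beta) i.
Proof.
rewrite /liftmax_den; case: unlift => [j|]; rewrite ?rmorph1 // rmorph_prod.
by apply: eq_bigr => j _; rewrite rmorphXn.
Qed.

Lemma liftmax_num_neq0 (R : idomainType) m e (beta : 'I_m -> R) i :
  (forall j, beta j != 0) -> liftmax_num e beta i != 0.
Proof. by rewrite /liftmax_num => nz; case: unlift => [j|]; rewrite ?expf_neq0 ?oner_neq0. Qed.

Lemma liftmax_den_neq0 (R : idomainType) m e (beta : 'I_m -> R) i :
  (forall j, beta j != 0) -> liftmax_den e beta i != 0.
Proof.
rewrite /liftmax_den => nz; case: unlift => [j|]; rewrite ?oner_neq0 //.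
by apply/prodf_neq0 => j _; rewrite expf_neq0.
Qed.

Section ScalarNorms.

Variables (F : fieldType) (L : fieldExtType F).

Lemma alg_div (a b : F) : (a%:A : L) / b%:A = (a / b)%:A.
Proof. by rewrite -!in_algE fmorph_div. Qed.

Lemma mul_mx_scalar (c : F) : mul_mx (c%:A : L) = c%:M.
Proof.
apply/matrixP => a b; rewrite /mul_mx !mxE mulr_algl linearZ /=.
by rewrite (tnth_nth 0) coord_free ?(basis_free (vbasisP _)) // mulr_natr.
Qed.

Lemma normLF_scalar (c : F) : normLF (c%:A : L) = c ^+ \dim {:L}.
Proof. by rewrite /normLF mul_mx_scalar det_scalar. Qed.

Lemma normpoly_scalar (P : {poly F}) :
  normpoly (map_poly (in_alg L) P) = P ^+ \dim {:L}.
Proof.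
rewrite /normpoly -det_scalar; congr (\det _); apply/matrixP => a b.
rewrite !mxE size_map_inj_poly ?rmorph0 //; last exact: fmorph_inj.
apply/polyP => k; rewrite coef_poly coefMn coef_map /= mul_mx_scalar mxE.
by case: ltnP => // hk; rewrite nth_default // mul0rn.
Qed.

End ScalarNorms.

Section ScalarPoints.

Variables (F : fieldType) (k : nat) (L : 'I_k -> fieldExtType F).

Lemma multinorm_torus_scalar_ratio (a b : 'I_k -> F) :
  (forall i, a i != 0) -> (forall i, b i != 0) ->
  \prod_(i < k) a i ^+ \dim {: L i} = \prod_(i < k) b i ^+ \dim {: L i} ->
  in_multinorm_torus (fun i => (a i / b i)%:A : L i).
Proof.
move=> a_nz b_nz ab; split=> [i|].
  by rewrite scaler_eq0 negb_or oner_neq0 mulf_neq0 ?invr_eq0.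
under eq_bigr => i _ do rewrite normLF_scalar expr_div_n.
rewrite big_split /= ab prodfV divff //.
by apply/prodf_neq0 => i _; rewrite expf_neq0.
Qed.

Lemma R_link_scalar_ratio (P Q : 'I_k -> {poly F}) :
  (forall i, (P i).[0] = 1) -> (forall i, (Q i).[0] = 1) ->
  (forall i, (Q i).[1] != 0) ->
  \prod_(i < k) P i ^+ \dim {: L i} = \prod_(i < k) Q i ^+ \dim {: L i} ->
  R_link (fun i => 1) (fun i => ((P i).[1] / (Q i).[1])%:A : L i).
Proof.
move=> P0 Q0 Q1 PQ.
have P_nz i : map_poly (in_alg (L i)) (P i) != 0.
  by rewrite map_poly_eq0; apply: contra_eq_neq (P0 i) => ->; rewrite horner0 eq_sym oner_neq0.
have Q0_nz i : (Q i).[0] != 0 by rewrite Q0 oner_neq0.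
have normPQ : \prod_(i < k) normpoly (map_poly (in_alg (L i)) (P i))
              = \prod_(i < k) Q i ^+ \dim {: L i}.
  by rewrite -PQ; apply: eq_bigr => i _; rewrite normpoly_scalar.
exists (RatMap P_nz Q0_nz Q1 normPQ).
split; apply: functional_extensionality_dep => i;
  by rewrite /rm_eval /= (horner_map (in_alg (L i))) /= alg_div ?P0 ?Q0 ?divr1 ?scale1r.
Qed.

End ScalarPoints.

Definition line_poly {F : fieldType} (a : F) : {poly F} := 'X * (a - 1)%:P + 1.

Lemma line_poly0 (F : fieldType) (a : F) : (line_poly a).[0] = 1.
Proof. by rewrite /line_poly !hornerE. Qed.

Lemma line_poly1 (F : fieldType) (a : F) : (line_poly a).[1] = a.
Proof. by rewrite /line_poly !hornerE subrK. Qed.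

Lemma in_RT_liftmax (F : fieldType) (m : nat) (L : 'I_m.+1 -> fieldExtType F)
    (e : 'I_m.+1 -> nat) (n : nat) (alpha : 'I_m -> F) :
  (forall j, alpha j != 0) -> (forall i, e i * \dim {: L i} = n)%N ->
  in_RT (fun i => (liftmax_num e alpha i / liftmax_den e alpha i)%:A : L i).
Proof.
move=> alpha_nz edn; split.
  apply: multinorm_torus_scalar_ratio => [i|i|].
  - exact: liftmax_num_neq0.
  - exact: liftmax_den_neq0.
  - exact: prod_liftmax_num_den edn.
pose P := liftmax_num e (line_poly \o alpha).
pose Q := liftmax_den e (line_poly \o alpha).
have P_at i a : (P i).[a] = liftmax_num e (fun j => (line_poly (alpha j)).[a]) i.
  exact: (rmorph_liftmax_num (horner_eval a)).
have Q_at i a : (Q i).[a] = liftmax_den e (fun j => (line_poly (alpha j)).[a]) i.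
  exact: (rmorph_liftmax_den (horner_eval a)).
have line_at0 : (fun j => (line_poly (alpha j)).[0]) = fun=> 1.
  by apply: functional_extensionality_dep => j; rewrite line_poly0.
have line_at1 : (fun j => (line_poly (alpha j)).[1]) = alpha.
  by apply: functional_extensionality_dep => j; rewrite line_poly1.
have -> : (fun i => (liftmax_num e alpha i / liftmax_den e alpha i)%:A : L i)
          = (fun i => ((P i).[1] / (Q i).[1])%:A).
  by apply: functional_extensionality_dep => i; rewrite P_at Q_at line_at1.
apply: rst_step; apply: R_link_scalar_ratio => [i|i|i|].
- by rewrite P_at line_at0 liftmax_num1.
- by rewrite Q_at line_at0 liftmax_den1.
- by rewrite Q_at line_at1 liftmax_den_neq0.
- exact: prod_liftmax_num_den edn.
Qed.

Theorem mainTheorem20 (F : fieldType) (m : nat)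
  (L : 'I_m.+1 -> fieldExtType F)
  (Lsep : forall i, separable (1%VS : {vspace L i}) fullv)
  (alpha : 'I_m -> F) (alpha_nz : forall j, alpha j != 0) :
  let nd := fun i => \dim {: L i} in
  let n := \big[lcmn/1%N]_(i < m.+1) nd i in
  in_RT (fun i : 'I_m.+1 =>
    (if unlift ord_max i is Some j
     then alpha j ^+ (n %/ nd i)
     else (\prod_(j < m) alpha j ^+ (n %/ nd ord_max))^-1)%:A : L i).
Proof.
move=> nd n; pose e i := (n %/ nd i)%N.
have /dvdn_biglcmP nd_dvd_n := dvdnn n.
have edn i : (e i * nd i)%N = n by rewrite divnK ?nd_dvd_n.
set x := (X in in_RT X).
have -> : x = (fun i => (liftmax_num e alpha i / liftmax_den e alpha i)%:A).
  apply: functional_extensionality_dep => i.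
  by rewrite /x /liftmax_num /liftmax_den; case: unlift => [j|]; rewrite ?divr1 ?div1r.
exact: in_RT_liftmax edn.
Qed.
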